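(* Let $\mathcal G$ be a locally compact Hausdorff étale ample groupoid with compact metrizable unit space. Then $\mathcal G$ has groupoid strict comparison if and only if $\mathcal G$ has groupoid strict comparison for compact open sets.
   Context: Ample: basis of compact open bisections (bisection: subset of an open set on which $s,r$ restrict to homeomorphisms onto open subsets of $\mathcal G^{(0)}$). $M(\mathcal G)$: regular Borel probability measures on $\mathcal G^{(0)}$ with $\mu(s(U))=\mu(r(U))$ for measurable bisections $U$. For compact $K$ and open $V$ in $\mathcal G^{(0)}$, $K\prec_{\mathcal G}V$ means there are open bisections $A_1,\dots,A_n$ with $K\subseteq\bigcup s(A_i)$ and $r(A_i)$ pairwise disjoint subsets of $V$; for open $U,V$, $U\precsim_{\mathcal G}V$ means $K\prec_{\mathcal G}V$ for all compact $K\subseteq U$. Groupoid strict comparison: $U\precsim_{\mathcal G}V$ for all open $U,V\subseteq\mathcal G^{(0)}$ with $\mu(U)<\mu(V)$ for every $\mu\in M(\mathcal G)$. Groupoid strict comparison for compact open sets: the same condition required only for compact open $U,V\subseteq\mathcal G^{(0)}$. *)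

From HB Require Import structures.
From mathcomp Require Import all_boot all_order all_algebra.
From mathcomp Require Import all_classical all_reals all_analysis.
Set Implicit Arguments. Unset Strict Implicit. Unset Printing Implicit Defensive.
Import Order.TTheory GRing.Theory Num.Theory.
Local Open Scope classical_set_scope.
Local Open Scope ring_scope.

(* An (algebraic) groupoid with arrow space G and unit space X.
   [unit] is the inclusion X -> G of the units; [mul g h] is the product gh,
   defined (meaningful) when [src g = rng h]. *)
Record groupoid (G X : Type) := Groupoid {
  src : G -> X;
  rng : G -> X;
  unit : X -> G;
  mul : G -> G -> G;
  inv : G -> G;
  src_unit : forall x, src (unit x) = x;
  rng_unit : forall x, rng (unit x) = x;
  src_mul : forall g h, src g = rng h -> src (mul g h) = src h;
  rng_mul : forall g h, src g = rng h -> rng (mul g h) = rng g;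
  mulA : forall g h k, src g = rng h -> src h = rng k ->
    mul (mul g h) k = mul g (mul h k);
  mul_unit_l : forall g, mul (unit (rng g)) g = g;
  mul_unit_r : forall g, mul g (unit (src g)) = g;
  src_inv : forall g, src (inv g) = rng g;
  rng_inv : forall g, rng (inv g) = src g;
  mul_inv_r : forall g, mul g (inv g) = unit (rng g);
  mul_inv_l : forall g, mul (inv g) g = unit (src g)
}.

Section Defs.
Context {G X : topologicalType} (Gd : groupoid G X).

(* topological groupoid: all structure maps continuous, multiplication on
   composable pairs (product topology), and [unit] a topological embedding
   identifying X with the unit space G^(0) (subspace topology). *)
Definition topological_groupoid : Prop :=
  continuous (src Gd) /\ continuous (rng Gd) /\ continuous (inv Gd) /\
  {within [set p : G * G | src Gd p.1 = rng Gd p.2],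
     continuous (fun p : G * G => mul Gd p.1 p.2)} /\
  continuous (unit Gd) /\
  (forall x y, unit Gd x = unit Gd y -> x = y) /\
  (forall A : set X, open A ->
     exists B : set G, open B /\ unit Gd @` A = B `&` range (unit Gd)).

Definition homeo_onto_open (f : G -> X) (V : set G) : Prop :=
  (forall g h, V g -> V h -> f g = f h -> g = h) /\
  {within V, continuous f} /\
  (forall W : set G, open W -> open (f @` (W `&` V))).

Definition bisection (B : set G) : Prop :=
  exists V : set G, open V /\ B `<=` V /\
    homeo_onto_open (src Gd) V /\ homeo_onto_open (rng Gd) V.

Definition open_bisection (B : set G) : Prop := open B /\ bisection B.

Definition measurable_bisection (B : set G) : Prop :=
  <<s (@open G) >> B /\ bisection B.

Definition etale : Prop :=
  forall g : G, exists V : set G, open V /\ V g /\ homeo_onto_open (src Gd) V.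

Definition ample : Prop :=
  forall (W : set G) (g : G), open W -> W g ->
    exists B : set G, compact B /\ open_bisection B /\ B g /\ B `<=` W.

Definition gprec (K V : set X) : Prop :=
  exists (n : nat) (A : nat -> set G),
    (forall i, (i < n)%N -> open_bisection (A i)) /\
    K `<=` \bigcup_(i in `I_n) (src Gd @` A i) /\
    (forall i, (i < n)%N -> rng Gd @` A i `<=` V) /\
    (forall i j, (i < n)%N -> (j < n)%N -> i <> j ->
       rng Gd @` A i `&` rng Gd @` A j = set0).

Definition gprecsim (U V : set X) : Prop :=
  forall K : set X, compact K -> K `<=` U -> gprec K V.

End Defs.

Definition metrizable (R : realType) (X : topologicalType) : Prop :=
  exists d : X -> X -> R,
    (forall x y, 0 <= d x y) /\ (forall x y, d x y = 0 <-> x = y) /\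
    (forall x y, d x y = d y x) /\
    (forall x y z, d x z <= d x y + d y z) /\
    (forall A : set X, open A <->
       (forall x, A x -> exists2 e : R, 0 < e & [set y | d x y < e] `<=` A)).

Definition borel (X : ptopologicalType) := g_sigma_algebraType (@open X).

Section Measures.
Context (R : realType) {G : topologicalType} {X : ptopologicalType}
  (Gd : groupoid G X).
Local Open Scope ereal_scope.

Definition invariant_prob_measure
    (mu : {measure set (borel X) -> \bar R}) : Prop :=
  mu setT = 1 /\
  (forall A : set (borel X), measurable A ->
     mu A = ereal_inf [set mu U | U in [set U : set X | open U /\ A `<=` U]] /\
     mu A = ereal_sup [set mu K | K in [set K : set X | compact K /\ K `<=` A]]) /\
  (forall U : set G, measurable_bisection Gd U ->
     mu (src Gd @` U) = mu (rng Gd @` U)).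

Definition strict_comparison : Prop :=
  forall U V : set X, open U -> open V ->
    (forall mu, invariant_prob_measure mu -> mu U < mu V) ->
    gprecsim Gd U V.

Definition strict_comparison_compact_open : Prop :=
  forall U V : set X, compact U -> open U -> compact V -> open V ->
    (forall mu, invariant_prob_measure mu -> mu U < mu V) ->
    gprecsim Gd U V.

End Measures.

From HB Require Import structures.
From mathcomp Require Import all_boot all_order all_algebra.
From mathcomp Require Import all_classical all_reals all_analysis.
From mathcomp Require Import finmap.
From mathcomp Require Import lra.

(* Strict comparison trivially implies strict comparison for compact open
   sets. Conversely let U, V be open with mu U < mu V for every invariant
   probability measure mu, and let K ⊆ U be compact. Images of compact open
   bisections form a clopen basis of X, so K lies in a clopen K' ⊆ U. The key
   step (clopen_inner_separation) produces a clopen C ⊆ V with mu K' < mu C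
   for every invariant mu; the hypothesis then gives K' ≾ C, hence K ≺ V.
   Were there no such C, pick for each clopen C ⊆ V an invariant mu_C with
   mu_C C <= mu_C K' and take the ultralimit lam of the mu_C along the clopen
   subsets of V directed by inclusion. By compactness lam is a premeasure on
   the ring of clopen sets, and since every open set is a countable union of
   clopen sets its Carathéodory extension nu is a regular invariant Borel
   probability measure with nu V <= nu K' <= nu U, a contradiction. *)

Set Implicit Arguments. Unset Strict Implicit. Unset Printing Implicit Defensive.
Import Order.TTheory GRing.Theory Num.Theory.
Import numFieldNormedType.Exports.
Local Open Scope classical_set_scope.
Local Open Scope ring_scope.

Definition clopen_basis (X : ptopologicalType) : Prop :=
  forall (A : set X) x, open A -> A x -> exists C, clopen C /\ C x /\ C `<=` A.

Section ClopenBasis.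
Context {X : ptopologicalType}.

Lemma clopenD (A B : set X) : clopen A -> clopen B -> clopen (A `\` B).
Proof. by move=> cA cB; rewrite setDE; apply: clopenI => //; exact: (@clopenC _ B B). Qed.

Lemma bigsetU_clopen (F : nat -> set X) n : (forall k, clopen (F k)) ->
  clopen (\big[setU/set0]_(k < n) F k).
Proof.
move=> cF; elim: n => [|n IH]; first by rewrite big_ord0; exact: clopen0.
by rewrite big_ord_recr /=; apply: clopenU.
Qed.

Hypothesis cbX : clopen_basis X.

(* A compact subset of an open set A lies in a clopen subset of A: cover it by
   finitely many basic clopen sets. *)
Lemma clopen_between (K A : set X) : compact K -> open A -> K `<=` A ->
  exists C, clopen C /\ K `<=` C /\ C `<=` A.
Proof.
move=> cK oA KA.
have /choice [f Hf] : forall x, exists C, A x -> clopen C /\ C x /\ C `<=` A.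
  move=> x; have [Ax|nAx] := pselect (A x); last by exists set0.
  by have [C [? [? ?]]] := cbX oA Ax; exists C.
have fK i : K i -> clopen (f i) by move=> Ki; have [] := Hf i (KA _ Ki).
have : cover_compact K by rewrite -(@compact_cover X).
case/(_ _ K f) => [i Ki|x Kx|D DK KD].
- by case: (fK i Ki).
- by exists x => //; have [_ []] := Hf x (KA _ Kx).
exists (\bigcup_(i in [set` D]) f i); split; last split=> //.
- split; first by apply: bigcup_open => i /DK /set_mem /fK [].
  apply: closed_bigcup; first exact: finite_fset.
  by move=> i /DK /set_mem /fK [].
- by move=> x [i /DK /set_mem Ki]; have [_ [_]] := Hf i (KA _ Ki); apply.
Qed.

End ClopenBasis.

Section Metric.
Context {R : realType} {X : ptopologicalType} (d : X -> X -> R).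
Hypotheses (d0 : forall x y, 0 <= d x y) (dE : forall x y, d x y = 0 <-> x = y)
  (dC : forall x y, d x y = d y x) (dT : forall x y z, d x z <= d x y + d y z)
  (dO : forall A : set X, open A <->
       (forall x, A x -> exists2 e : R, 0 < e & [set y | d x y < e] `<=` A)).

Lemma ball_open x e : open [set y | d x y < e].
Proof.
apply/dO => y /= dxy; exists (e - d x y); first by rewrite subr_gt0.
by move=> z /= dyz; apply: (le_lt_trans (dT x y z)); rewrite -ltrBrDl.
Qed.

Lemma metric_hausdorff : hausdorff_space X.
Proof.
rewrite open_hausdorff => x y nxy.
have dpos : 0 < d x y.
  by rewrite lt_neqAle d0 andbT; apply: contra nxy => /eqP/esym/dE ->.
have dxx z : d z z = 0 by exact/dE.
exists ([set z | d x z < d x y / 2], [set z | d y z < d x y / 2]) => /=.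
  by split; apply/mem_set; rewrite /= dxx divr_gt0.
split; [exact: ball_open|exact: ball_open|].
apply/eqP; rewrite -subset0 => z [/= h1 h2].
have := dT x z y; rewrite (dC z y) {1}(splitr (d x y)) => h.
by have := ltrD h1 h2; rewrite ltNge h.
Qed.

Hypotheses (cbX : clopen_basis X) (cX : compact [set: X]).

(* In a compact metric space with a clopen basis every open set A is a
   countable union of clopen sets: the compact sets
   F n = {x | B(x, 1/(n+1)) ⊆ A} exhaust A, and each sits in a clopen
   subset of A. *)
Lemma open_clopen_union (A : set X) : open A ->
  exists C : nat -> set X, (forall n, clopen (C n)) /\ A = \bigcup_n C n.
Proof.
move=> oA.
pose F n := [set x | forall y, d x y < n.+1%:R^-1 -> A y].
have cF n : compact (F n).
  apply: (subclosed_compact _ cX) => //.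
  rewrite -[F n]setCK closedC; apply/dO => x /= /existsNP [y].
  move=> /not_implyP [dxy nAy]; exists (n.+1%:R^-1 - d x y); first by rewrite subr_gt0.
  move=> z /= dxz Fz; apply: nAy; apply: Fz.
  by apply: (le_lt_trans (dT z x y)); rewrite dC -ltrBrDr.
have FA n : F n `<=` A by move=> x; apply; rewrite (proj2 (dE x x) erefl).
have /choice [C HC] : forall n, exists C, clopen C /\ F n `<=` C /\ C `<=` A.
  by move=> n; apply: clopen_between.
exists C; split; first by move=> n; case: (HC n).
apply/seteqP; split; last by move=> x [n _ Cx]; have [_ [_]] := HC n; apply.
move=> x Ax; have [e e0 eA] := (proj1 (dO A) oA) x Ax.
have [n] := ltr_add_invr e0; rewrite add0r => ne.
exists n => //; have [_ [+ _]] := HC n; apply => y dxy; apply: eA => /=.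
exact: lt_trans ne.
Qed.

End Metric.

Section AmpleClopenBasis.
Context {G : topologicalType} {X : ptopologicalType} (Gd : groupoid G X).
Hypotheses (cs : continuous (src Gd)) (aG : ample Gd) (hX : hausdorff_space X).

(* The unit space of an ample groupoid with continuous source map and
   Hausdorff unit space has a clopen basis: if x is in the open set A, some
   compact open bisection B through the unit at x lies in the open set
   s^-1(A), and s(B) is open (s is a homeomorphism onto an open set near B)
   and compact, hence closed. *)
Lemma ample_clopen_basis : clopen_basis X.
Proof.
move=> A x oA Ax.
have oW : open (src Gd @^-1` A) by apply: open_comp => // y _; exact: cs.
have Wux : (src Gd @^-1` A) (unit Gd x) by rewrite /= src_unit.
have [B [cB [[oB [V [_ [BV [[_ [_ opV]] _]]]]] [Bux BA]]]] := aG oW Wux.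
exists (src Gd @` B); split; last split.
- split; first by rewrite -(setIidl BV); exact: opV oB.
  apply: compact_closed => //; apply: continuous_compact => //.
  by apply: continuous_subspaceT => y; exact: cs.
- by exists (unit Gd x) => //; rewrite src_unit.
- by move=> _ [g /BA Ag <-].
Qed.

End AmpleClopenBasis.

Section UltraLimit.
Context {R : realType} {I : Type} (F : set_system I) (FU : UltraFilter F).

(* Along an ultrafilter every [0,1]-valued family converges: [0,1] is compact
   and an ultrafilter decides every set. *)
Lemma ultra_cvg01 (f : I -> R) : (forall i, 0 <= f i <= 1) -> cvg (f @ F).
Proof.
move=> f01; have FF : ProperFilter F by exact: ultra_proper.
have h01 : F (f @^-1` [set` `[0:R, 1]]).
  by apply: filterE => i; rewrite /= in_itv /=; have := f01 i.
have [p [_ cp]] := @segment_compact R 0 1 (f @ F) _ h01.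
apply/cvg_ex; exists p => B Bp.
have [//|nB] := in_ultra_setVsetC (f @^-1` B) FU.
have nB' : (f @ F) (~` B) by [].
by have [z []] := cp _ B nB' Bp.
Qed.

Lemma ultra_lim01 (f : I -> R) : (forall i, 0 <= f i <= 1) ->
  0 <= lim (f @ F) <= 1.
Proof.
move=> f01; have FF : ProperFilter F by exact: ultra_proper.
have cf := ultra_cvg01 f01.
apply/andP; split; [apply: limr_ge => //|apply: limr_le => //];
  by apply: filterE => i; have /andP[] := f01 i.
Qed.

End UltraLimit.

Section UltraLimitOfMeasures.
Context {R : realType} {X : ptopologicalType}.
Context {I : Type} (F : set_system I) (FU : UltraFilter F)
  (mu : I -> {measure set (borel X) -> \bar R}).
Hypothesis mu1 : forall i, mu i setT = 1%E.

Let FF : ProperFilter F. Proof. exact: ultra_proper. Qed.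

(* The mass of A under mu i as a real number, truncated to [0,1] so that it
   is defined for every set and the ultralimit exists. *)
Definition mass i (A : set X) : R := Num.min (fine (mu i A)) 1.

Definition lam (A : set X) : R := lim ((fun i => mass i A) @ F).

Lemma mass01 i A : 0 <= mass i A <= 1.
Proof.
rewrite /mass ge_min lexx orbT andbT le_min ler01 andbT.
by apply: fine_ge0; exact: measure_ge0.
Qed.

Lemma lam01 A : 0 <= lam A <= 1.
Proof. exact: ultra_lim01 (mass01 ^~ A). Qed.

Lemma cvg_mass A : cvg ((fun i => mass i A) @ F).
Proof. exact: ultra_cvg01 (mass01 ^~ A). Qed.

Lemma massE i (A : set (borel X)) : measurable A -> mu i A = (mass i A)%:E.
Proof.
move=> mA.
have h1 : (mu i A <= 1)%E.
  by rewrite -(mu1 i); apply: le_measure; [exact: mem_set|exact: (mem_set measurableT)|].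
have fA : mu i A \is a fin_num by rewrite ge0_fin_numE ?measure_ge0 // (le_lt_trans h1) ?ltry.
rewrite /mass -[in LHS](fineK fA) min_l //; by rewrite -lee_fin fineK.
Qed.

Lemma lamD (A B : set (borel X)) : measurable A -> measurable B ->
  A `&` B = set0 -> lam (A `|` B) = lam A + lam B.
Proof.
move=> mA mB AB.
have e : (fun i => mass i (A `|` B)) = (fun i => mass i A) + (fun i => mass i B).
  apply/funext => i /=; apply/EFin_inj.
  by rewrite -massE ?measureU // ?EFinD -?massE //; exact: measurableU.
rewrite /lam e; apply: cvg_lim => //; apply: cvgD; exact: cvg_mass.
Qed.

Lemma lam_near (A B : set (borel X)) : measurable A -> measurable B ->
  (\forall i \near F, (mu i A <= mu i B)%E) -> lam A <= lam B.
Proof.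
move=> mA mB h; rewrite -subr_ge0 /lam.
apply: (@cvgr_to_ge _ F FF _ ((fun i => mass i B) - (fun i => mass i A))).
  by apply: cvgB; exact: cvg_mass.
by apply: filterS h => i; rewrite !massE // lee_fin /= subr_ge0.
Qed.

Lemma lam_le (A B : set (borel X)) : measurable A -> measurable B ->
  A `<=` B -> lam A <= lam B.
Proof.
move=> mA mB AB; apply: lam_near => //; apply: filterE => i.
by apply: le_measure => //; exact: mem_set.
Qed.

Lemma lam0 : lam set0 = 0.
Proof.
rewrite /lam (_ : (fun i => mass i set0) = fun=> 0) ?lim_cst //.
by apply/funext => i; rewrite /mass measure0 /= min_l ?ler01.
Qed.

Lemma lamT : lam setT = 1.
Proof.
rewrite /lam (_ : (fun i => mass i setT) = fun=> 1) ?lim_cst //.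
by apply/funext => i; rewrite /mass mu1 /= min_l.
Qed.

(* Sets that every mu i weighs equally get the same lam-mass; this is how
   invariance passes to the limit. *)
Lemma lam_eq (A B : set X) : (forall i, mu i A = mu i B) -> lam A = lam B.
Proof. by move=> h; rewrite /lam; under eq_fun do rewrite /mass h. Qed.

End UltraLimitOfMeasures.

(* X with the ring of clopen sets as its measurable sets: the domain of the
   premeasure that is extended to the limit measure. *)
Definition clopens (X : ptopologicalType) : Type := X.
HB.instance Definition _ (X : ptopologicalType) := Pointed.on (clopens X).
HB.instance Definition _ (X : ptopologicalType) :=
  @isRingOfSets.Build default_measure_display (clopens X) (@clopen X)
    (@clopen0 X) (@clopenU X) (@clopenD X).

Section LimitMeasure.
Context {R : realType} {X : ptopologicalType}.
Hypothesis cX : compact [set: X].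
Context {I : Type} (F : set_system I) (FU : UltraFilter F)
  (mu : I -> {measure set (borel X) -> \bar R}).
Hypothesis mu1 : forall i, mu i setT = 1%E.

Local Notation lam := (lam F mu).

Lemma clopen_measurable (A : set X) : clopen A -> measurable (A : set (borel X)).
Proof. by case=> oA _; apply: sub_sigma_algebra. Qed.

Lemma lam_bigsetU (D : nat -> set X) n :
  (forall k, measurable (D k : set (borel X))) -> trivIset setT D ->
  lam (\big[setU/set0]_(k < n) D k) = \sum_(k < n) lam (D k).
Proof.
move=> mD tD; elim: n => [|n IH]; first by rewrite !big_ord0 (lam0 FU).
rewrite !big_ord_recr /= (lamD FU mu1) ?IH //; first exact: bigsetU_measurable.
rewrite -bigcup_mkord; apply/seteqP; split => // x [[k /= kn Dkx] Dnx].
by have /= kn' := tD k n Logic.I Logic.I (ex_intro _ x (conj Dkx Dnx)); rewrite kn' ltnn in kn.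
Qed.

(* By compactness, a disjoint sequence of clopen sets with clopen union has
   only finitely many nonempty terms. *)
Lemma clopen_partition_finite (D : nat -> set X) : (forall k, clopen (D k)) ->
  trivIset setT D -> clopen (\bigcup_k D k) ->
  exists N, forall i, (N <= i)%N -> D i = set0.
Proof.
move=> cD tD [_ cU].
have cpU : compact (\bigcup_k D k) by exact: (subclosed_compact cU cX).
have : cover_compact (\bigcup_k D k) by rewrite -(@compact_cover X).
case/(_ _ setT D) => [i _|x [k _ Dkx]|N _ UN]; [by case: (cD i)|by exists k|].
exists (\max_(j <- N) j).+1 => i Ni; apply/seteqP; split => // x Dix.
have [j Nj Djx] := UN x (ex_intro2 _ _ i Logic.I Dix).
have ij : i = j by apply: (tD i j Logic.I Logic.I); exists x.
have : (j <= \max_(j <- N) j)%N by apply: leq_bigmax_seq.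
by rewrite -ij leqNgt Ni.
Qed.

(* lam restricted to clopen sets is a premeasure: countable additivity reduces
   to finite additivity by the previous lemma. *)
Definition lam_clopen (A : set (clopens X)) : \bar R := (lam A)%:E.

Lemma lam_clopen0 : lam_clopen set0 = 0%E.
Proof. by rewrite /lam_clopen (lam0 FU). Qed.

Lemma lam_clopen_ge0 A : (0 <= lam_clopen A)%E.
Proof. by rewrite /lam_clopen lee_fin; have /andP[] := lam01 FU mu A. Qed.

Lemma lam_clopen_sigma_additive : semi_sigma_additive lam_clopen.
Proof.
move=> D mD tD mU; have [N HN] := clopen_partition_finite mD tD mU.
apply: cvg_near_cst; exists N => // n /= Nn.
rewrite big_mkord sumEFin /lam_clopen -lam_bigsetU //; last first.
  by move=> k; apply: clopen_measurable; exact: mD.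
congr (EFin (lam _)); rewrite -bigcup_mkord; apply/seteqP; split.
  by move=> x [k _ Dkx]; exists k.
move=> x [k _ Dkx]; exists k => //=; rewrite ltnNge; apply/negP => nk.
by rewrite (HN k (leq_trans Nn nk)) in Dkx.
Qed.

HB.instance Definition _ := isMeasure.Build _ (clopens X) R lam_clopen
  lam_clopen0 lam_clopen_ge0 lam_clopen_sigma_additive.

Hypothesis open_clopen_seq : forall A : set X, open A ->
  exists C : nat -> set X, (forall n, clopen (C n)) /\ A = \bigcup_n C n.

Local Open Scope ereal_scope.

Lemma borel_sub_clopen_sigma (A : set X) :
  <<s (@open X) >> A -> <<s (@clopen X) >> A.
Proof.
apply: smallest_sub; first exact: smallest_sigma_algebra.
move=> O oO; have [C [cC ->]] := open_clopen_seq oO.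
by apply: sigma_algebra_bigcup => n; apply: sub_sigma_algebra; exact: cC.
Qed.

Definition nu (A : set (borel X)) : \bar R := mu_ext lam_clopen (A : set (clopens X)).

Lemma nu0 : nu set0 = 0. Proof. exact: mu_ext0. Qed.
Lemma nu_ge0 A : 0 <= nu A. Proof. exact: mu_ext_ge0. Qed.

Lemma nu_caratheodory (A : set (borel X)) : measurable A ->
  (mu_ext lam_clopen).-caratheodory (A : set (clopens X)).
Proof.
by move=> mA; apply: (@sub_caratheodory _ (clopens X) R lam_clopen); exact: borel_sub_clopen_sigma.
Qed.

Lemma nu_sigma_additive : semi_sigma_additive nu.
Proof.
move=> D mD tD mUD; rewrite /nu.
apply: (@caratheodory_measure_sigma_additive R (clopens X) (mu_ext lam_clopen) D) => //.
- by move=> i; exact: nu_caratheodory.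
- exact: nu_caratheodory.
Qed.

HB.instance Definition _ := isMeasure.Build _ (borel X) R nu nu0 nu_ge0
  nu_sigma_additive.

Lemma nu_clopen (A : set X) : clopen A -> nu A = (lam A)%:E.
Proof. by move=> cA; rewrite /nu measurable_mu_extE. Qed.

Lemma nu_setT : nu setT = 1.
Proof. by rewrite nu_clopen ?(lamT FU mu1) //; exact: clopenT. Qed.

Lemma open_clopen_partition (O : set X) : open O ->
  exists D : nat -> set X, [/\ forall n, clopen (D n), trivIset setT D &
    O = \bigcup_n D n].
Proof.
move=> oO; have [C [cC ->]] := open_clopen_seq oO.
exists (seqDU C); split; [|exact: trivIset_seqDU|exact: seqDU_bigcup_eq].
by move=> n; apply: clopenD => //; exact: bigsetU_clopen.
Qed.

Lemma nu_open_le (O : set X) (t : R) : open O ->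
  (forall C, clopen C -> C `<=` O -> (lam C <= t)%R) -> nu O <= t%:E.
Proof.
move=> oO h; have [D [cD tD eO]] := open_clopen_partition oO; rewrite eO.
have mD k : measurable (D k : set (borel X)) by apply: clopen_measurable.
have nuD := @measure_sigma_additive _ R (borel X) nu D mD tD.
rewrite -(cvg_lim _ nuD) //; apply: lime_le; first by apply/cvg_ex; eexists; exact: nuD.
apply: nearW => n /=.
rewrite (eq_bigr (fun k => (lam (D k))%:E)); last by move=> k _; rewrite nu_clopen.
rewrite big_mkord sumEFin lee_fin -lam_bigsetU //; apply: h; first exact: bigsetU_clopen.
by rewrite -bigcup_mkord eO => x [k _ Dkx]; exists k.
Qed.

Lemma nu_le1 (A : set (borel X)) : nu A <= 1.
Proof. by rewrite -nu_setT /nu; apply: le_outer_measure. Qed.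

Lemma nu_fin (A : set (borel X)) : nu A = (fine (nu A))%:E.
Proof. by rewrite fineK // ge0_fin_numE ?nu_ge0 // (le_lt_trans (nu_le1 A)) ?ltry. Qed.

Lemma nu_compl (A : set (borel X)) : measurable A ->
  (fine (nu A) + fine (nu (~` A)) = 1)%R.
Proof.
move=> mA; apply: EFin_inj; rewrite EFinD -!nu_fin.
rewrite -measureU //; [|exact: measurableC|by rewrite setICr].
by rewrite setUCr; exact: nu_setT.
Qed.

(* Outer regularity: the Carathéodory covers by clopen sequences are
   themselves open covers. *)
Lemma nu_outer_regular (A : set (borel X)) :
  nu A = ereal_inf [set nu U | U in [set U : set X | open U /\ A `<=` U]].
Proof.
apply/eqP; rewrite eq_le; apply/andP; split.
  apply: le_ereal_inf_tmp => _ [U [oU AU] <-].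
  by rewrite /nu; apply: le_outer_measure.
rewrite [X in _ <= X]/nu /mu_ext.
apply: le_ereal_inf_tmp => _ [B [mB AB] <-].
apply: (@le_trans _ _ (nu (\bigcup_k B k))).
  apply: ereal_inf_lbound; exists (\bigcup_k B k) => //; split => //.
  by apply: bigcup_open => k _; case: (mB k).
rewrite /nu; apply: le_trans; first exact: outer_measure_sigma_subadditive.
rewrite le_eqVlt; apply/orP; left; apply/eqP; apply: eq_eseriesr => k _.
exact: (@measurable_mu_extE _ R (clopens X) lam_clopen (B k) (mB k)).
Qed.

(* Inner regularity follows from outer regularity of the complement, since
   closed subsets of the compact space X are compact. *)
Lemma nu_inner_regular (A : set (borel X)) : measurable A ->
  nu A = ereal_sup [set nu K | K in [set K : set X | compact K /\ K `<=` A]].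
Proof.
move=> mA; set s := ereal_sup _.
have s1 : s <= 1 by apply: ge_ereal_sup => _ [K _ <-]; exact: nu_le1.
have s0 : 0 <= s.
  apply: le_ereal_sup_tmp; exists 0 => //.
  by exists set0; [split => //; exact: compact0|exact: nu0].
have sfin : s = (fine s)%:E by rewrite fineK // ge0_fin_numE // (le_lt_trans s1) ?ltry.
apply/eqP; rewrite eq_le; apply/andP; split; last first.
  by apply: ge_ereal_sup => _ [K [cK KA] <-]; rewrite /nu; apply: le_outer_measure.
have mC : measurable (~` A) by exact: measurableC.
have cover_bound (W : set X) : open W -> ~` A `<=` W -> (1 - fine s <= fine (nu W))%R.
  move=> oW AW; have mW : measurable (W : set (borel X)) by exact: sub_sigma_algebra.
  have : nu (~` W) <= s.
    apply: ereal_sup_ubound; exists (~` W) => //; split.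
      by apply: (subclosed_compact _ cX) => //; rewrite closedC.
    by move=> x nWx; apply: contrapT => nAx; apply: nWx; exact: AW.
  by rewrite sfin nu_fin lee_fin; have := nu_compl mW; lra.
have : (1 - fine s)%:E <= nu (~` A).
  rewrite nu_outer_regular; apply: le_ereal_inf_tmp => _ [W [oW AW] <-].
  by rewrite (nu_fin W) lee_fin; exact: cover_bound.
rewrite nu_fin lee_fin => h2.
by rewrite sfin nu_fin lee_fin; have := nu_compl mA; lra.
Qed.

(* If lam gives the same
   mass to the f- and g-images of all open subsets of V, then the g-image of
   any U ⊆ V has at most the nu-mass of its f-image: a clopen cover of f(U)
   is transported through f and g to an open cover of g(U), and the clopen
   subsets of each transported piece are again g-images of open sets. *)
Lemma nu_image_le {G : topologicalType} (f g : G -> X) (V U : set G) :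
  continuous f -> continuous g -> open V -> U `<=` V ->
  homeo_onto_open f V -> homeo_onto_open g V ->
  (forall B, open B -> B `<=` V -> lam (f @` B) = lam (g @` B)) ->
  nu (g @` U) <= nu (f @` U).
Proof.
move=> cf cg oV UV [injf [_ opf]] [injg [_ opg]] hinv.
have image_open h : (forall W, open W -> open (h @` (W `&` V))) ->
    forall B, open B -> B `<=` V -> open (h @` B).
  by move=> oph B oB BV; rewrite -(setIidl BV); exact: oph.
have ofV : open (f @` V) by exact: image_open.
rewrite [X in _ <= X]/nu /mu_ext; apply: le_ereal_inf_tmp => _ [C [mC fUC] <-].
pose B k := V `&` f @^-1` (C k `&` f @` V).
have oB k : open (B k).
  apply: openI => //; apply: open_comp => [u _|]; first exact: cf.
  by apply: openI => //; case: (mC k).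
apply: (@le_trans _ _ (nu (\bigcup_k g @` B k))).
  rewrite /nu; apply: le_outer_measure => _ [u Uu <-].
  have [k _ Ckfu] := fUC _ (ex_intro2 _ _ u Uu erefl).
  exists k => //; exists u => //; split; first exact: UV.
  by split => //; exists u => //; exact: UV.
rewrite /nu; apply: le_trans; first exact: outer_measure_sigma_subadditive.
apply: lee_nneseries => [k _ _|k _]; first exact: mu_ext_ge0.
apply: nu_open_le; first by apply: image_open => // u [].
move=> D cD DgB; pose B' := V `&` g @^-1` D.
have oB' : open B'.
  by apply: openI => //; apply: open_comp => [u _|]; [exact: cg|case: cD].
have B'B : B' `<=` B k.
  move=> u [Vu Dgu]; have [u' Bu' gu'] := DgB _ Dgu.
  by rewrite -(injg u' u) //; case: Bu'.
have -> : D = g @` B'.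
  apply/seteqP; split; last by move=> _ [u [_ Du] <-].
  move=> x Dx; have [u Bu gux] := DgB _ Dx; exists u => //.
  by split; [case: Bu|rewrite /= gux].
rewrite -hinv //; last by move=> u [].
have ofB' : open (f @` B') by apply: image_open => // u [].
apply: (lam_le FU mu1); [exact: sub_sigma_algebra|exact: clopen_measurable (mC k)|].
by move=> _ [u /B'B [_ [Ck _]] <-].
Qed.

Lemma limit_measure {G : topologicalType} (Gd : groupoid G X) :
  topological_groupoid Gd ->
  (forall i (U : set G), measurable_bisection Gd U ->
     mu i (src Gd @` U) = mu i (rng Gd @` U)) ->
  exists nu' : {measure set (borel X) -> \bar R},
    invariant_prob_measure Gd nu' /\
    (forall A, clopen A -> nu' A = (lam A)%:E) /\
    (forall (O : set X) t, open O ->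
      (forall C, clopen C -> C `<=` O -> (lam C <= t)%R) -> nu' O <= t%:E).
Proof.
move=> [cs [cr _]] hmu; exists nu; split; last by split; [exact: nu_clopen|exact: nu_open_le].
split; first exact: nu_setT.
split; first by move=> A mA; split; [exact: nu_outer_regular|exact: nu_inner_regular].
move=> U [_ [V [oV [UV [hs hr]]]]].
have hinv B : open B -> B `<=` V -> lam (src Gd @` B) = lam (rng Gd @` B).
  move=> oB BV; apply: lam_eq => i; apply: hmu; split; first exact: sub_sigma_algebra.
  by exists V.
apply/eqP; rewrite eq_le; apply/andP; split.
  by apply: (nu_image_le cr cs oV UV hr hs) => B oB BV; rewrite hinv.
exact: (nu_image_le cs cr oV UV hs hr hinv).
Qed.

End LimitMeasure.

Lemma gprec_mono {G X : topologicalType} (Gd : groupoid G X) (K V V' : set X) :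
  gprec Gd K V -> V `<=` V' -> gprec Gd K V'.
Proof.
move=> [n [A [oA [KA [AV disjA]]]]] VV'; exists n, A; split => //; split => //.
by split => // i ni; apply: subset_trans VV'; exact: AV.
Qed.

Definition clopen_below {X : ptopologicalType} (V : set X) : Type :=
  {C : set X | clopen C /\ C `<=` V}.

(* Some ultrafilter on the clopen subsets of V contains every final segment
   {C | C0 ⊆ C}: these segments form a proper filter base because the union
   of two clopen subsets of V is again one. *)
Lemma clopen_below_ultrafilter {X : ptopologicalType} (V : set X) :
  exists Fu : set_system (clopen_below V), UltraFilter Fu /\
    forall (C0 : clopen_below V) (P : clopen_below V -> Prop),
      (forall C, sval C0 `<=` sval C -> P C) -> Fu P.
Proof.
pose Ev : set_system (clopen_below V) := fun P =>
  exists C0 : clopen_below V, forall C, sval C0 `<=` sval C -> P C.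
have I0 : clopen_below V by exists set0; split; [exact: clopen0|].
have EvF : ProperFilter Ev.
  constructor; first by move=> [C0 h]; exact: (h C0).
  constructor; [by exists I0| |by move=> P Q PQ [C0 h]; exists C0 => C /h /PQ].
  move=> P Q [C1 h1] [C2 h2].
  have [[cC1 C1V] [cC2 C2V]] := (svalP C1, svalP C2).
  have c12 : clopen (sval C1 `|` sval C2) /\ sval C1 `|` sval C2 `<=` V.
    by split; [exact: clopenU|move=> x [] ?; [exact: C1V|exact: C2V]].
  exists (exist (fun C => clopen C /\ C `<=` V) _ c12) => C /= h; split.
    by apply: h1 => x ?; apply: h; left.
  by apply: h2 => x ?; apply: h; right.
have [Fu [FU EvFu]] := ultraFilterLemma EvF.
by exists Fu; split => // C0 P h; apply: EvFu; exists C0.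
Qed.

Section ClopenSeparation.
Context {R : realType} {G : topologicalType} {X : ptopologicalType}
  (Gd : groupoid G X).
Hypotheses (tG : topological_groupoid Gd) (cX : compact [set: X])
  (open_clopen_seq : forall A : set X, open A ->
     exists C : nat -> set X, (forall n, clopen (C n)) /\ A = \bigcup_n C n).

Local Open Scope ereal_scope.

Lemma clopen_inner_separation (K V : set X) : clopen K -> open V ->
  (forall mu : measure (borel X) R, invariant_prob_measure Gd mu -> mu K < mu V) ->
  exists C, clopen C /\ C `<=` V /\
    (forall mu : measure (borel X) R, invariant_prob_measure Gd mu -> mu K < mu C).
Proof.
move=> cK oV KV; apply: contrapT => noC.
have /choice [mu Hmu] : forall C : clopen_below V, exists mu : measure (borel X) R,
    invariant_prob_measure Gd mu /\ mu (sval C) <= mu K.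
  move=> [C [cC CV]] /=; apply: contrapT => hC; apply: noC.
  exists C; split => //; split => // mu imu; rewrite ltNge; apply/negP => le.
  by apply: hC; exists mu.
have [Fu [FU tails]] := clopen_below_ultrafilter V.
have mu1 i : mu i setT = 1 by have [[]] := Hmu i.
have hinv i (W : set G) : measurable_bisection Gd W ->
    mu i (src Gd @` W) = mu i (rng Gd @` W).
  by have [[_ [_ h]] _] := Hmu i; exact: h.
have [nu [inu [nuC nuO]]] := limit_measure cX FU mu1 open_clopen_seq tG hinv.
suff : nu V <= nu K by rewrite leNgt KV.
rewrite (nuC K cK); apply: (nuO V _ oV) => C0 cC0 C0V.
apply: (lam_near FU mu1); [exact: clopen_measurable cC0|exact: clopen_measurable cK|].
apply: (tails (exist _ C0 (conj cC0 C0V))) => C /= C0C.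
apply: le_trans (proj2 (Hmu C)); apply: le_measure => //; apply: mem_set.
  exact: clopen_measurable cC0.
exact: clopen_measurable (proj1 (svalP C)).
Qed.

End ClopenSeparation.

Unset Implicit Arguments.
Local Close Scope ring_scope.
Theorem proposition5p5 (R : realType) (G : topologicalType)
  (X : ptopologicalType) (Gd : groupoid G X) :
  topological_groupoid Gd ->
  locally_compact [set: G] -> hausdorff_space G ->
  etale Gd -> ample Gd ->
  compact [set: X] -> metrizable R X ->
  strict_comparison R Gd <-> strict_comparison_compact_open R Gd.
Proof.
move=> tG _ _ _ aG cX [d [d0 [dE [dC [dT dO]]]]].
have hX := metric_hausdorff d0 dE dC dT dO.
have cbX : clopen_basis X := ample_clopen_basis (proj1 tG) aG hX.
have open_clopen_seq := open_clopen_union dE dC dT dO cbX cX.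
have clopen_compact (A : set X) : clopen A -> compact A.
  by move=> [_ cA]; exact: (subclosed_compact cA cX).
split=> [sc U V _ oU _ oV|sc U V oU oV UV K cK KU]; first exact: sc.
have [K' [cK' [KK' K'U]]] := clopen_between cbX cK oU KU.
have K'V (mu : measure (borel X) R) :
    invariant_prob_measure Gd mu -> (mu K' < mu V)%E.
  move=> imu; have K'U' : (mu K' <= mu U)%E.
    apply: le_measure => //; apply: mem_set; first exact: clopen_measurable cK'.
    exact: sub_sigma_algebra.
  exact: le_lt_trans K'U' (UV mu imu).
have [C [cC [CV K'C]]] := clopen_inner_separation tG cX open_clopen_seq cK' oV K'V.
apply: gprec_mono CV.
exact: sc K' C (clopen_compact _ cK') cK'.1 (clopen_compact _ cC) cC.1 K'C K cK KK'.
Qed.
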